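(* Let $V\in C^\infty(\mathbb{R}^n)$ with $\alpha_0>-\infty$, let $a\in\mathbb{R}$ satisfy $a+\alpha_0>\frac{\nu^2}4$, and let $P(x):=\begin{pmatrix}2I&\nu I\\\nu I&2\frac{\partial^2V}{\partial x^2}(x)+2aI\end{pmatrix}$. Then for all $x\in\mathbb{R}^n$ $$c_1P(x)\le\begin{pmatrix}I&0\\0&\frac{\partial^2V}{\partial x^2}(x)+(1-\alpha_0)I\end{pmatrix}\le c_2P(x),$$ with $c_1:=\dfrac{1}{a+\alpha_0+1+\sqrt{(a+\alpha_0-1)^2+\nu^2}}>0$ and $c_2:=\dfrac{a+\alpha_0+1+\sqrt{(a+\alpha_0-1)^2+\nu^2}}{4(a+\alpha_0)-\nu^2}>0$.
   Context: $\nu>0$ is a constant and $I$ the $n\times n$ identity. $\alpha(x)$ is the smallest eigenvalue of $\frac{\partial^2V}{\partial x^2}(x)$ and $\alpha_0:=\inf_{x\in\mathbb{R}^n}\alpha(x)$. For symmetric matrices, $A\ge B$ means $A-B$ is positive semi-definite. *)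

From HB Require Import structures.
From mathcomp Require Import all_boot all_order all_algebra.
From mathcomp Require Import all_classical all_reals all_analysis.
Set Implicit Arguments. Unset Strict Implicit. Unset Printing Implicit Defensive.
Import Order.TTheory GRing.Theory Num.Theory.
Import numFieldNormedType.Exports.
Local Open Scope classical_set_scope.
Local Open Scope ring_scope.

Section Defs.
Variables (R : realType) (n : nat).

Definition partial (i : 'I_n) (f : 'rV[R]_n -> R) : 'rV[R]_n -> R :=
  fun x => 'D_(delta_mx 0 i) f x.

Definition iter_partial (l : seq 'I_n) (f : 'rV[R]_n -> R) : 'rV[R]_n -> R :=
  foldr partial f l.

Definition smooth (f : 'rV[R]_n -> R) : Prop :=
  forall l : seq 'I_n, continuous (iter_partial l f) /\
    forall (i : 'I_n) (x : 'rV[R]_n), derivable (iter_partial l f) x (delta_mx 0 i).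

Definition hessian (V : 'rV[R]_n -> R) (x : 'rV[R]_n) : 'M[R]_n :=
  \matrix_(i, j) partial i (partial j V) x.

Definition alpha (V : 'rV[R]_n -> R) (x : 'rV[R]_n) : R :=
  inf [set a : R | eigenvalue (hessian V x) a].

Definition alpha0 (V : 'rV[R]_n -> R) : R := inf (range (alpha V)).

End Defs.

Definition psd {R : realType} {m : nat} (A : 'M[R]_m) : Prop :=
  forall v : 'cV[R]_m, 0 <= (v^T *m A *m v) 0 0.
Definition mxle {R : realType} {m : nat} (A B : 'M[R]_m) : Prop := psd (B - A).

From HB Require Import structures.
From mathcomp Require Import all_boot all_order all_algebra.
From mathcomp Require Import all_classical all_reals all_analysis.
From mathcomp Require Import ring lra.
Import Order.TTheory GRing.Theory Num.Theory.
Import numFieldNormedType.Exports.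
Local Open Scope classical_set_scope.
Local Open Scope ring_scope.

(* With [H := hessian V x], both [Q x - c1 *: P x] and [c2 *: P x - Q x] have
   the shape [[alpha I, beta I]; [beta I, gamma I + delta H]] with
   [alpha, delta >= 0].  As [H - alpha0 V I] is positive semidefinite, such a
   matrix is positive semidefinite as soon as the scalar 2x2 condition
   [beta ^+ 2 <= alpha * (gamma + delta * alpha0 V)] holds, and the choice of
   [c1] and [c2] makes it an equality.
   [H - alpha0 V I] is positive semidefinite because [H] is symmetric (Schwarz)
   and the infimum [m] of the Rayleigh quotient of a symmetric matrix is an
   eigenvalue: otherwise [H - m I] would be invertible and positive
   semidefinite, hence coercive, and [m] would not be the infimum. *)

Section Schwarz.
Context {R : realType} {V : normedModType R}.
Implicit Types (f g : V -> R) (e p x y : V).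

Lemma is_derive_line f e p s :
  derivable f (s *: e + p) e ->
  is_derive s 1 (fun t : R => f (t *: e + p)) ('D_e f (s *: e + p)).
Proof.
move=> df.
have E : (fun h : R => h^-1 *: (((fun t : R => f (t *: e + p)) \o shift s) (h *: 1)
             - f (s *: e + p))) =
         (fun h : R => h^-1 *: ((f \o shift (s *: e + p)) (h *: e) - f (s *: e + p))).
  by apply/funext => h /=; rewrite [h *: 1]mulr1 scalerDl addrA.
have dg : derivable (fun t : R => f (t *: e + p)) s 1 by rewrite /derivable E.
by apply: DeriveDef => //; rewrite /derive E.
Qed.

Lemma MVT0 (phi dphi : R -> R) (h : R) : 0 < h ->
  (forall s : R, is_derive s 1 phi (dphi s)) ->
  exists2 c, 0 < c < h & phi h - phi 0 = h * dphi c.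
Proof.
move=> h0 dphiP.
have [|c] := MVT h0 (fun s _ => dphiP s).
  by apply: derivable_within_continuous => s _; have [] := dphiP s.
by rewrite in_itv /= subr0 mulrC => ch ->; exists c.
Qed.

Definition second_difference f e1 e2 x (h : R) :=
  f (h *: e1 + (h *: e2 + x)) - f (h *: e1 + x) - (f (h *: e2 + x) - f x).

Lemma second_differenceC f e1 e2 x h :
  second_difference f e1 e2 x h = second_difference f e2 e1 x h.
Proof.
rewrite /second_difference [h *: e1 + (_ + x)]addrCA !opprB addrACA [RHS]addrACA.
by rewrite [- f (h *: e1 + x) + _]addrC.
Qed.

Lemma second_difference_mvt f e1 e2 x (h : R) : 0 < h ->
  (forall y, derivable f y e1) -> (forall y, derivable ('D_e1 f) y e2) ->
  exists xi eta, [/\ 0 < xi < h, 0 < eta < h &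
    second_difference f e1 e2 x h =
    h * (h * 'D_e2 ('D_e1 f) (eta *: e2 + (xi *: e1 + x)))].
Proof.
move=> h0 d1 d12.
pose phi (s : R) := f (s *: e1 + (h *: e2 + x)) - f (s *: e1 + x).
have [xi xih Exi] : exists2 xi, 0 < xi < h & phi h - phi 0 =
    h * ('D_e1 f (xi *: e1 + (h *: e2 + x)) - 'D_e1 f (xi *: e1 + x)).
  by apply: MVT0 => // s; apply: is_deriveB; apply: is_derive_line.
have [eta etah Eeta] := MVT0 _ _ _ h0
  (fun t => is_derive_line ('D_e1 f) e2 (xi *: e1 + x) t (d12 _)).
exists xi, eta; split => //.
move: Exi; rewrite /second_difference /phi !scale0r !add0r => ->.
by rewrite -Eeta /= scale0r add0r addrCA.
Qed.

Lemma continuous_eq_near g1 g2 x : {for x, continuous g1} -> {for x, continuous g2} ->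
  (forall r, 0 < r -> exists y1 y2, [/\ `|x - y1| < r, `|x - y2| < r & g1 y1 = g2 y2]) ->
  g1 x = g2 x.
Proof.
move=> g1x g2x near_eq.
apply/eqP; rewrite -subr_eq0 -normr_le0; apply/ler_addgt0Pr => eps eps0.
have eps20 : 0 < eps / 2 by rewrite divr_gt0.
have /cvgrPdist_lt /(_ _ eps20) /nbhs_ballP [r1 r1_gt0 g1r1] := g1x.
have /cvgrPdist_lt /(_ _ eps20) /nbhs_ballP [r2 r2_gt0 g2r2] := g2x.
have [|y1 [y2 [y1x y2x g12]]] := near_eq (Num.min r1 r2); first by rewrite lt_min r1_gt0.
have /g1r1 /ltW lt1 : ball x r1 y1.
  by rewrite -ball_normE /ball_ /= (lt_le_trans y1x) // ge_min lexx.
have /g2r2 /ltW lt2 : ball x r2 y2.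
  by rewrite -ball_normE /ball_ /= (lt_le_trans y2x) // ge_min lexx orbT.
rewrite g12 in lt1; rewrite distrC in lt2; rewrite add0r [X in _ <= X]splitr.
exact: le_trans (ler_distD _ _ _) (lerD lt1 lt2).
Qed.

Lemma norm_square_point_lt e1 e2 x (a b h : R) :
  0 < a < h -> 0 < b < h -> `|x - (a *: e1 + (b *: e2 + x))| < h * (`|e1| + `|e2| + 1).
Proof.
move=> /andP[a0 ah] /andP[b0 bh].
rewrite [a *: e1 + _]addrA opprD addrCA subrr addr0 normrN.
apply: le_lt_trans (ler_normD _ _) _.
rewrite !normrZ (gtr0_norm a0) (gtr0_norm b0) mulrDr mulr1 ltr_pwDr ?(lt_trans a0) //.
by rewrite mulrDr lerD // ler_wpM2r ?normr_ge0 // ltW.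
Qed.

Lemma schwarz f e1 e2 x :
  (forall y, derivable f y e1) -> (forall y, derivable f y e2) ->
  (forall y, derivable ('D_e1 f) y e2) -> (forall y, derivable ('D_e2 f) y e1) ->
  {for x, continuous ('D_e2 ('D_e1 f))} -> {for x, continuous ('D_e1 ('D_e2 f))} ->
  'D_e2 ('D_e1 f) x = 'D_e1 ('D_e2 f) x.
Proof.
move=> d1 d2 d12 d21 c12 c21; apply: continuous_eq_near c12 c21 _ => r r0.
have N0 : 0 < `|e1| + `|e2| + 1 by rewrite ltr_wpDl ?addr_ge0.
pose h := r / (`|e1| + `|e2| + 1).
have h0 : 0 < h by rewrite divr_gt0.
have hN : h * (`|e1| + `|e2| + 1) = r by rewrite divfK ?lt0r_neq0.
have [xi [eta [xih etah E12]]] := second_difference_mvt _ _ _ x _ h0 d1 d12.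
have [xi' [eta' [xih' etah' E21]]] := second_difference_mvt _ _ _ x _ h0 d2 d21.
exists (eta *: e2 + (xi *: e1 + x)), (eta' *: e1 + (xi' *: e2 + x)); split.
- by rewrite -hN [`|e1| + _]addrC norm_square_point_lt.
- by rewrite -hN norm_square_point_lt.
- move: E21; rewrite -second_differenceC E12.
  by move=> /(mulfI (lt0r_neq0 h0)) /(mulfI (lt0r_neq0 h0)).
Qed.
End Schwarz.

Section QuadraticForms.
Context {R : realFieldType} {n : nat}.
Implicit Types (A B : 'M[R]_n) (u v w : 'cV[R]_n).

Definition dotmx u v := (u^T *m v) 0 0.
Definition qform A v := (v^T *m A *m v) 0 0.

Lemma qform0r A : qform A 0 = 0.
Proof. by rewrite /qform mulmx0 mxE. Qed.

Lemma dotmx0 : dotmx (0 : 'cV[R]_n) 0 = 0.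
Proof. by rewrite /dotmx mulmx0 mxE. Qed.

Lemma dotmxE u v : dotmx u v = \sum_i u i 0 * v i 0.
Proof. by rewrite /dotmx mxE; apply: eq_bigr => i _; rewrite mxE. Qed.

Lemma dotmxC u v : dotmx u v = dotmx v u.
Proof. by rewrite !dotmxE; apply: eq_bigr => i _; rewrite mulrC. Qed.

Lemma dotmxDr u v w : dotmx u (v + w) = dotmx u v + dotmx u w.
Proof. by rewrite !dotmxE -big_split; apply: eq_bigr => i _; rewrite mxE mulrDr. Qed.

Lemma dotmxZr (a : R) u v : dotmx u (a *: v) = a * dotmx u v.
Proof. by rewrite !dotmxE mulr_sumr; apply: eq_bigr => i _; rewrite mxE mulrCA. Qed.

Lemma qform_dotmx A v : qform A v = dotmx v (A *m v).
Proof. by rewrite /qform /dotmx mulmxA. Qed.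

Lemma dotmx_lincomb (a b : R) u w :
  dotmx (a *: u + b *: w) (a *: u + b *: w) =
  a ^+ 2 * dotmx u u + 2 * a * b * dotmx u w + b ^+ 2 * dotmx w w.
Proof.
rewrite !dotmxE !mulr_sumr -!big_split /=; apply: eq_bigr => i _.
by rewrite !mxE; ring.
Qed.

Lemma sqr_coord_le_dotmx v i : v i 0 ^+ 2 <= dotmx v v.
Proof.
rewrite dotmxE (bigD1 i) //= -expr2 lerDl.
by apply: sumr_ge0 => j _; rewrite -expr2 sqr_ge0.
Qed.

Lemma dotmx_ge0 v : 0 <= dotmx v v.
Proof. by rewrite dotmxE sumr_ge0 // => i _; rewrite -expr2 sqr_ge0. Qed.

Lemma dotmx_gt0 v : v != 0 -> 0 < dotmx v v.
Proof.
apply: contraNT; rewrite -leNgt => v_le0; apply/eqP/matrixP => i j.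
rewrite ord1 mxE; apply/eqP; rewrite -sqrf_eq0 eq_le sqr_ge0 andbT.
exact: le_trans (sqr_coord_le_dotmx v i) v_le0.
Qed.

Lemma dotmx_quadratic_ge0 (a b c : R) u w :
  0 <= a -> 0 <= c -> b ^+ 2 <= a * c ->
  0 <= a * dotmx u u + 2 * b * dotmx u w + c * dotmx w w.
Proof.
move=> a0 c0; have [-> bac|a_neq0 bac] := eqVneq a 0.
  rewrite mul0r in bac.
  have -> : b = 0 by apply/eqP; rewrite -sqrf_eq0 eq_le bac sqr_ge0.
  by rewrite !(mul0r, mulr0, add0r) mulr_ge0 ?dotmx_ge0.
have a_gt0 : 0 < a by rewrite lt_def a_neq0.
rewrite -(pmulr_rge0 _ a_gt0).
have := dotmx_ge0 (a *: u + b *: w); rewrite dotmx_lincomb.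
have := dotmx_ge0 w; have := sqr_ge0 b; nra.
Qed.

Lemma qformE A v : qform A v = \sum_i \sum_j v i 0 * A i j * v j 0.
Proof.
rewrite /qform mxE exchange_big /=; apply: eq_bigr => j _.
by rewrite mxE mulr_suml; apply: eq_bigr => i _; rewrite !mxE.
Qed.

Lemma qform_bounded A : exists2 C, 0 < C & forall v, qform A v <= C * dotmx v v.
Proof.
exists (1 + \sum_i \sum_j `|A i j|) => [|v].
  by rewrite ltr_pwDl // sumr_ge0 // => i _; rewrite sumr_ge0.
have dv0 := dotmx_ge0 v.
apply: le_trans (_ : _ <= (\sum_i \sum_j `|A i j|) * dotmx v v) _; last first.
  by rewrite mulrDl mul1r lerDr.
rewrite qformE mulr_suml; apply: ler_sum => i _.
rewrite mulr_suml; apply: ler_sum => j _.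
have := sqr_coord_le_dotmx v i; have := sqr_coord_le_dotmx v j.
rewrite -[v i 0 ^+ 2]real_normK ?num_real // -[v j 0 ^+ 2]real_normK ?num_real //.
move=> vj vi; apply: le_trans (ler_norm _) _.
rewrite normrM normrM mulrAC mulrC ler_wpM2l //.
have := normr_ge0 (v i 0); have := normr_ge0 (v j 0); nra.
Qed.

Lemma qformN A v : qform (- A) v = - qform A v.
Proof. by rewrite /qform mulmxN mulNmx mxE. Qed.

Lemma qform_subr_scalar A (m : R) v : qform (A - m%:M) v = qform A v - m * dotmx v v.
Proof.
by rewrite /qform /dotmx mulmxBr mulmxBl mul_mx_scalar -scalemxAl !mxE.
Qed.

Lemma dotmx_mulmx B v : dotmx (B *m v) (B *m v) = qform (B^T *m B) v.
Proof. by rewrite /dotmx /qform trmx_mul !mulmxA. Qed.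

Lemma qform_subr_mulmx A u (t : R) : A^T = A ->
  qform A (u - t *: (A *m u)) =
  qform A u - 2 * t * dotmx (A *m u) (A *m u) + t ^+ 2 * qform A (A *m u).
Proof.
move=> symA; rewrite /qform /dotmx; set w := A *m u.
have uAw : u^T *m A *m w = w^T *m w by rewrite /w trmx_mul symA.
have wAu : w^T *m A *m u = w^T *m w by rewrite /w trmx_mul symA -!mulmxA.
have -> : (u - t *: w)^T = u^T - t *: w^T by rewrite linearB linearZ.
rewrite !mulmxBl !mulmxBr -!scalemxAl -!scalemxAr.
rewrite uAw wAu !mxE; ring.
Qed.

Lemma dotmx_mulmx_le_qform A (C : R) u : A^T = A ->
  (forall v, 0 <= qform A v) -> 0 < C -> (forall v, qform A v <= C * dotmx v v) ->
  dotmx (A *m u) (A *m u) <= C * qform A u.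
Proof.
move=> symA psdA C0 boundA.
have := psdA (u - C^-1 *: (A *m u)); rewrite qform_subr_mulmx //.
have := boundA (A *m u).
set N := dotmx _ _; set Q := qform A (A *m u); set q := qform A u => QN h.
have : 0 <= C ^+ 2 * q - 2 * C * N + Q.
  suff -> : C ^+ 2 * q - 2 * C * N + Q = C ^+ 2 * (q - 2 * C^-1 * N + C^-1 ^+ 2 * Q).
    by rewrite mulr_ge0 ?sqr_ge0.
  by field; rewrite lt0r_neq0.
nra.
Qed.

Lemma psd_unitmx_coercive A : A^T = A -> (forall v, 0 <= qform A v) ->
  A \in unitmx -> exists2 eps, 0 < eps & forall u, eps * dotmx u u <= qform A u.
Proof.
move=> symA psdA unitA.
have [C C0 boundA] := qform_bounded A.
have [K K0 boundK] := qform_bounded ((invmx A)^T *m invmx A).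
exists (C * K)^-1 => [|u]; first by rewrite invr_gt0 mulr_gt0.
have uK : dotmx u u <= K * dotmx (A *m u) (A *m u).
  rewrite -[in dotmx u u](mulKmx unitA u) [X in X <= _]dotmx_mulmx.
  exact: boundK.
have := dotmx_mulmx_le_qform _ _ u symA psdA C0 boundA.
rewrite ler_pdivrMl ?mulr_gt0 //; nra.
Qed.
End QuadraticForms.

Lemma dotmx_col_mx {R : realFieldType} {m n : nat} (u u' : 'cV[R]_m) (w w' : 'cV[R]_n) :
  dotmx (col_mx u w) (col_mx u' w') = dotmx u u' + dotmx w w'.
Proof. by rewrite /dotmx tr_col_mx mul_row_col mxE. Qed.

Section MinEigenvalue.
Context {R : realType} {n : nat}.
Implicit Types (H : 'M[R]_n) (u v w : 'cV[R]_n).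

Lemma sym_mx_min_eigenvalue H v : H^T = H -> v != 0 ->
  exists2 m, eigenvalue H m & forall w, m * dotmx w w <= qform H w.
Proof.
move=> symH v0.
pose S := [set qform H u / dotmx u u | u in [set u | u != 0]].
have S0 : S !=set0 by exists (qform H v / dotmx v v), v.
have Slb : has_lbound S.
  have [C _ boundN] := qform_bounded (- H).
  exists (- C) => _ [u /= u0 <-]; rewrite ler_pdivlMr ?dotmx_gt0 //.
  by rewrite mulNr lerNl -qformN.
have m_lb w : inf S * dotmx w w <= qform H w.
  have [->|w0] := eqVneq w 0; first by rewrite dotmx0 qform0r mulr0.
  by rewrite -ler_pdivlMr ?dotmx_gt0 //; apply: ge_inf => //; exists w.
exists (inf S) => //; apply/eigenvalueP.
have : ~~ (H - (inf S)%:M \in unitmx).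
  apply/negP => unitHm.
  have symHm : (H - (inf S)%:M)^T = H - (inf S)%:M.
    by rewrite linearB /= tr_scalar_mx symH.
  have psdHm u : 0 <= qform (H - (inf S)%:M) u.
    by rewrite qform_subr_scalar subr_ge0.
  have [eps eps0 epsP] := psd_unitmx_coercive _ symHm psdHm unitHm.
  suff : inf S + eps <= inf S by rewrite gerDl leNgt eps0.
  apply: lb_le_inf => // _ [u /= u0 <-]; rewrite ler_pdivlMr ?dotmx_gt0 //.
  by have := epsP u; rewrite qform_subr_scalar mulrDl lerBrDl addrC.
rewrite unitmxE unitfE negbK => /det0P[w w0].
by rewrite mulmxBr mul_mx_scalar => /eqP; rewrite subr_eq0 => /eqP Hw; exists w.
Qed.

Lemma inf_eigenvalue_le_qform H v : H^T = H ->
  inf [set a | eigenvalue H a] * dotmx v v <= qform H v.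
Proof.
move=> symH; have [->|v0] := eqVneq v 0; first by rewrite dotmx0 qform0r mulr0.
have [m eig_m m_lb] := sym_mx_min_eigenvalue _ _ symH v0.
suff -> : inf [set a | eigenvalue H a] = m by [].
have m_lbound : lbound [set a | eigenvalue H a] m.
  move=> l /eigenvalueP[w Hw w0].
  have wT0 : w^T != 0 by rewrite trmx_eq0.
  have : qform H w^T = l * dotmx w^T w^T.
    by rewrite /qform /dotmx trmxK Hw -scalemxAl mxE.
  by have := m_lb w^T => /[swap] ->; rewrite ler_pM2r ?dotmx_gt0.
apply/le_anti/andP; split; first by apply: ge_inf => //; exists m.
by apply: lb_le_inf => //; exists m.
Qed.
End MinEigenvalue.

Section ScalarBlocks.
Context {R : realType} {n : nat}.
Implicit Types (H : 'M[R]_n) (u w : 'cV[R]_n).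

Definition scalar_block_mx (a b c d : R) H : 'M[R]_(n + n) :=
  block_mx a%:M b%:M b%:M (d *: H + c%:M).

Lemma scalar_block_mxZ (k a b c d : R) H :
  k *: scalar_block_mx a b c d H = scalar_block_mx (k * a) (k * b) (k * c) (k * d) H.
Proof. by rewrite /scalar_block_mx scale_block_mx scalerDr scalerA !scale_scalar_mx. Qed.

Lemma scalar_block_mxB (a b c d a' b' c' d' : R) H :
  scalar_block_mx a b c d H - scalar_block_mx a' b' c' d' H =
  scalar_block_mx (a - a') (b - b') (c - c') (d - d') H.
Proof.
rewrite /scalar_block_mx opp_block_mx add_block_mx !raddfB /= scalerBl.
by rewrite opprD addrACA.
Qed.

Lemma qform_scalar_block_mx (a b c d : R) H u w :
  qform (scalar_block_mx a b c d H) (col_mx u w) =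
  a * dotmx u u + 2 * b * dotmx u w + c * dotmx w w + d * qform H w.
Proof.
rewrite qform_dotmx /scalar_block_mx mul_block_col mulmxDl !mul_scalar_mx.
rewrite -scalemxAl dotmx_col_mx !dotmxDr !dotmxZr -qform_dotmx (dotmxC w u).
ring.
Qed.

Lemma psd_scalar_block_mx (m a b c d : R) H :
  (forall w, m * dotmx w w <= qform H w) -> 0 <= a -> 0 <= d ->
  0 <= c + d * m -> b ^+ 2 <= a * (c + d * m) ->
  psd (scalar_block_mx a b c d H).
Proof.
move=> Hm a0 d0 cdm0 bac v.
suff : 0 <= qform (scalar_block_mx a b c d H) v by [].
rewrite -[v]vsubmxK qform_scalar_block_mx.
have := dotmx_quadratic_ge0 _ _ _ (usubmx v) (dsubmx v) a0 cdm0 bac.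
have := ler_wpM2l d0 (Hm (dsubmx v)).
lra.
Qed.
End ScalarBlocks.

Section Coefficients.
Context {R : realFieldType} {b nu s : R}.
Hypotheses (s_ge0 : 0 <= s) (s_sqr : s ^+ 2 = (b - 1) ^+ 2 + nu ^+ 2)
  (disc_gt0 : nu ^+ 2 < 4 * b).
(* [L] is the larger root of [L ^+ 2 - 2 * (b + 1) * L + D = 0], that is
   [(L - 2) * (L - 2 * b) = nu ^+ 2]: this turns both determinant conditions
   into equalities. *)
Local Notation L := (b + 1 + s).
Local Notation D := (4 * b - nu ^+ 2).

Let b_gt0 : 0 < b.
Proof. by have := sqr_ge0 nu; move: disc_gt0; lra. Qed.

Let subr1_le : b - 1 <= s /\ 1 - b <= s.
Proof.
have : `|b - 1| <= s.
  rewrite -ler_sqr ?nnegrE ?normr_ge0 // -normrX ger0_norm ?sqr_ge0 //.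
  by rewrite s_sqr lerDl sqr_ge0.
by rewrite ler_norml; lra.
Qed.

Lemma lower_coeffs (c := L^-1) :
  [/\ 0 < c, 0 <= 1 - c * 2, 0 <= 1 - 2 * b * c &
      (c * nu) ^+ 2 = (1 - c * 2) * (1 - 2 * b * c)].
Proof.
have [le_s ge_s] := subr1_le.
have b0 := b_gt0.
have L0 : 0 < L by lra.
have c0 : 0 < c by rewrite invr_gt0.
have e1 : 1 - c * 2 = c * (b - 1 + s) by rewrite /c; field; rewrite lt0r_neq0.
have e2 : 1 - 2 * b * c = c * (1 - b + s) by rewrite /c; field; rewrite lt0r_neq0.
have key : (b - 1 + s) * (1 - b + s) = nu ^+ 2.
  by apply: (addrI ((b - 1) ^+ 2)); rewrite -s_sqr; ring.
split => //.
- by rewrite e1 mulr_ge0 ?(ltW c0) //; lra.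
- by rewrite e2 mulr_ge0 ?(ltW c0) //; lra.
- by rewrite e1 e2 mulrACA key; ring.
Qed.

Lemma upper_coeffs (c := L / D) :
  [/\ 0 < c, 0 <= c * 2 - 1, 0 <= 2 * b * c - 1 &
      (c * nu) ^+ 2 = (c * 2 - 1) * (2 * b * c - 1)].
Proof.
have [le_s ge_s] := subr1_le.
have D0 : 0 < D by rewrite subr_gt0.
have e1 : c * 2 - 1 = (2 * L - D) / D by rewrite /c; field; rewrite lt0r_neq0.
have e2 : 2 * b * c - 1 = (2 * b * L - D) / D by rewrite /c; field; rewrite lt0r_neq0.
have key : (2 * L - D) * (2 * b * L - D) = (L * nu) ^+ 2.
  apply/eqP; rewrite -subr_eq0.
  have -> : (2 * L - D) * (2 * b * L - D) - (L * nu) ^+ 2 =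
            D * (s ^+ 2 - ((b - 1) ^+ 2 + nu ^+ 2)) by ring.
  by rewrite s_sqr subrr mulr0.
have b0 := b_gt0; have nu2_ge0 := sqr_ge0 nu.
split.
- by rewrite divr_gt0 //; lra.
- by rewrite e1 divr_ge0 ?(ltW D0) //; lra.
- by rewrite e2 divr_ge0 ?(ltW D0) //; nra.
- by rewrite e1 e2 mulf_div key /c; field; rewrite lt0r_neq0.
Qed.
End Coefficients.

Section Hessian.
Context {R : realType} {n : nat}.
Implicit Types (V : 'rV[R]_n -> R) (x : 'rV[R]_n).

Lemma hessian_sym V x : smooth V -> (hessian V x)^T = hessian V x.
Proof.
move=> sV; apply/matrixP => i j; rewrite !mxE.
have [_ d0] := sV [::]; have [_ di] := sV [:: i]; have [_ dj] := sV [:: j].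
have [cij _] := sV [:: i; j]; have [cji _] := sV [:: j; i].
exact: schwarz _ _ _ x (d0 i) (d0 j) (di j) (dj i) (cji x) (cij x).
Qed.

Lemma alpha0_le_alpha V x : (exists m, forall y, m <= alpha V y) -> alpha0 V <= alpha V x.
Proof. by move=> [m m_lb]; apply: ge_inf; [exists m => _ [y _ <-] | exists x]. Qed.

Lemma alpha0_le_qform_hessian V x w : smooth V -> (exists m, forall y, m <= alpha V y) ->
  alpha0 V * dotmx w w <= qform (hessian V x) w.
Proof.
move=> sV alpha_lb; apply: le_trans (inf_eigenvalue_le_qform _ w (hessian_sym _ x sV)).
by apply: ler_wpM2r; [exact: dotmx_ge0 | exact: alpha0_le_alpha].
Qed.
End Hessian.

Theorem lemma6p1 (R : realType) (n : nat) (nu : R) (V : 'rV[R]_n -> R) (a : R) :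
  0 < nu ->
  smooth V ->
  (exists m : R, forall x, m <= alpha V x) ->
  a + alpha0 V > nu ^+ 2 / 4 ->
  let c1 := (a + alpha0 V + 1 + Num.sqrt ((a + alpha0 V - 1) ^+ 2 + nu ^+ 2))^-1 in
  let c2 := (a + alpha0 V + 1 + Num.sqrt ((a + alpha0 V - 1) ^+ 2 + nu ^+ 2))
            / (4 * (a + alpha0 V) - nu ^+ 2) in
  let P := fun x => block_mx (2%:M : 'M[R]_n) nu%:M nu%:M
                     (2 *: hessian V x + (2 * a)%:M) in
  let Q := fun x => block_mx (1%:M : 'M[R]_n) 0 0
                     (hessian V x + (1 - alpha0 V)%:M) in
  0 < c1 /\ 0 < c2 /\
  forall x : 'rV[R]_n, mxle (c1 *: P x) (Q x) /\ mxle (Q x) (c2 *: P x).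
Proof.
move=> _ sV alpha_lb disc c1 c2 P Q.
pose s := Num.sqrt ((a + alpha0 V - 1) ^+ 2 + nu ^+ 2).
have s_sqr : s ^+ 2 = (a + alpha0 V - 1) ^+ 2 + nu ^+ 2.
  by rewrite sqr_sqrtr // addr_ge0 ?sqr_ge0.
have {}disc : nu ^+ 2 < 4 * (a + alpha0 V) by lra.
have [c1_gt0 l1 l2 l3] := lower_coeffs (sqrtr_ge0 _) s_sqr disc.
have [c2_gt0 u1 u2 u3] := upper_coeffs (sqrtr_ge0 _) s_sqr disc.
have hessian_ge x w := alpha0_le_qform_hessian _ x w sV alpha_lb.
have EP x : P x = scalar_block_mx 2 nu (2 * a) 2 (hessian V x) by [].
have EQ x : Q x = scalar_block_mx 1 0 (1 - alpha0 V) 1 (hessian V x).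
  by rewrite /Q /scalar_block_mx scale1r raddf0.
split => //; split => // x; rewrite /mxle EP EQ !scalar_block_mxZ !scalar_block_mxB.
rewrite /c1 /c2 /s in l1 l2 l3 u1 u2 u3 *.
by split; (apply: (psd_scalar_block_mx (alpha0 V)); first exact: hessian_ge); lra.
Qed.
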